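(* Let $F$ be a field and $A$ a unital $F$-algebra. The following are equivalent: (i) $A$ is von-Neumann finite; (ii) every subalgebra of $A$ generated by at most two elements is von-Neumann finite; (iii) any two elements $a,b\in A$ with $ab\in F\setminus\{0\}$ (i.e. $ab$ a nonzero scalar multiple of $1$) commute. Likewise, the following are equivalent: (i') $A$ is reversible; (ii') every subalgebra of $A$ generated by at most two elements is reversible; (iii') any two elements $a,b\in A$ with $ab=0$ commute.
   Context: An $F$-algebra is a vector space with bilinear, not necessarily associative, multiplication; subalgebras are unital subalgebras. $A$ is von-Neumann finite if $ab=1$ implies $ba=1$, and reversible if $ab=0$ implies $ba=0$, for all $a,b\in A$. *)

From mathcomp Require Import all_boot all_algebra.
Set Implicit Arguments. Unset Strict Implicit. Unset Printing Implicit Defensive.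
Import GRing.Theory.
Local Open Scope ring_scope.

(* A (not necessarily associative) unital F-algebra: an F-vector space V
   with a bilinear multiplication [mul] and a two-sided unit [one]. *)
Definition unital_algebra (F : fieldType) (V : lmodType F)
  (mul : V -> V -> V) (one : V) : Prop :=
  [/\ forall (c : F) (x y z : V), mul (c *: x + y) z = c *: mul x z + mul y z,
      forall (c : F) (x y z : V), mul x (c *: y + z) = c *: mul x y + mul x z,
      forall x : V, mul one x = x
    & forall x : V, mul x one = x].

Definition is_subalgebra (F : fieldType) (V : lmodType F)
  (mul : V -> V -> V) (one : V) (S : V -> Prop) : Prop :=
  [/\ S 0, S one,
      forall x y, S x -> S y -> S (x + y),
      forall (c : F) x, S x -> S (c *: x)
    & forall x y, S x -> S y -> S (mul x y)].

Definition gen2 (F : fieldType) (V : lmodType F)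
  (mul : V -> V -> V) (one : V) (a b : V) : V -> Prop :=
  fun x => forall S : V -> Prop, is_subalgebra mul one S -> S a -> S b -> S x.

Definition vN_finite_on (V : Type) (mul : V -> V -> V) (one : V)
  (S : V -> Prop) : Prop :=
  forall x y, S x -> S y -> mul x y = one -> mul y x = one.

Definition reversible_on (F : fieldType) (V : lmodType F) (mul : V -> V -> V)
  (S : V -> Prop) : Prop :=
  forall x y, S x -> S y -> mul x y = 0 -> mul y x = 0.

From mathcomp Require Import all_boot all_algebra.
Import GRing.Theory.
Local Open Scope ring_scope.

(* Each condition (ii) is a statement about pairs, and every pair lies in the
   subalgebra it generates, so (i) <-> (ii) holds for any pairwise property.
   For (iii): if ab = c1 with c != 0, then a (c^-1 b) = 1, so finiteness gives
   (c^-1 b) a = 1, i.e. ba = c1 = ab; conversely ab = 1 is a nonzero scalar.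
   The reversible case is the same argument with 0 in place of the scalars. *)

Section LinearCombinationMap.

Variables (F : fieldType) (U W : lmodType F) (f : U -> W).
Hypothesis f_lin : forall (c : F) (x y : U), f (c *: x + y) = c *: f x + f y.

Lemma lin_map0 : f 0 = 0.
Proof.
apply: (@addrI _ (f 0)); rewrite addr0.
by have := f_lin 1 0 0; rewrite !(scale1r, addr0).
Qed.

Lemma lin_mapZ (c : F) (x : U) : f (c *: x) = c *: f x.
Proof. by have := f_lin c x 0; rewrite !addr0 lin_map0 addr0. Qed.

End LinearCombinationMap.

Section Gen2.

Variables (F : fieldType) (V : lmodType F) (mul : V -> V -> V) (one : V).

Lemma gen2_l (a b : V) : gen2 mul one a b a.
Proof. by move=> S _ Sa. Qed.

Lemma gen2_r (a b : V) : gen2 mul one a b b.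
Proof. by move=> S _ _ Sb. Qed.

Lemma pairwise_gen2P (P : V -> V -> Prop) :
  (forall x y : V, True -> True -> P x y) <->
  (forall a b x y : V, gen2 mul one a b x -> gen2 mul one a b y -> P x y).
Proof.
split=> [HP a b x y _ _ | HP x y _ _]; first exact: HP.
exact: (HP x y x y (gen2_l x y) (gen2_r x y)).
Qed.

End Gen2.

Section UnitalAlgebra.

Variables (F : fieldType) (V : lmodType F) (mul : V -> V -> V) (one : V).
Hypothesis alg : unital_algebra mul one.

Lemma mulZl (c : F) (x y : V) : mul (c *: x) y = c *: mul x y.
Proof. by case: alg => mulDl _ _ _; exact: (@lin_mapZ _ _ _ (mul^~ y)). Qed.

Lemma mulZr (c : F) (x y : V) : mul x (c *: y) = c *: mul x y.
Proof. by case: alg => _ mulDr _ _; exact: (@lin_mapZ _ _ _ (mul x)). Qed.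

Lemma vN_finite_scalar_commute :
  vN_finite_on mul one (fun _ => True) <->
  (forall a b : V, (exists c : F, c != 0 /\ mul a b = c *: one) ->
                   mul a b = mul b a).
Proof.
split=> [vNF a b [c [c_neq0 ab_c]] | Hcomm x y _ _ xy1].
- have a_cb : mul a (c^-1 *: b) = one.
    by rewrite mulZr ab_c scalerA mulVf // scale1r.
  have := vNF _ _ I I a_cb; rewrite mulZl => /(congr1 (fun v => c *: v)).
  by rewrite scalerA mulfV // scale1r -ab_c => ->.
- rewrite -xy1; symmetry; apply: Hcomm.
  by exists 1; rewrite oner_eq0 scale1r.
Qed.

End UnitalAlgebra.

Lemma reversible_zero_commute (F : fieldType) (V : lmodType F)
    (mul : V -> V -> V) :
  reversible_on mul (fun _ => True) <->
  (forall a b : V, mul a b = 0 -> mul a b = mul b a).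
Proof.
split=> [rev a b ab0 | Hcomm x y _ _ xy0]; first by rewrite ab0 (rev a b I I ab0).
by rewrite -(Hcomm x y xy0).
Qed.

Theorem lemma3p3 (F : fieldType) (V : lmodType F)
  (mul : V -> V -> V) (one : V) :
  unital_algebra mul one ->
  ((vN_finite_on mul one (fun _ => True) <->
      (forall a b : V, vN_finite_on mul one (gen2 mul one a b))) /\
   (vN_finite_on mul one (fun _ => True) <->
      (forall a b : V, (exists c : F, c != 0 /\ mul a b = c *: one) ->
                       mul a b = mul b a))) /\
  ((reversible_on mul (fun _ => True) <->
      (forall a b : V, reversible_on mul (gen2 mul one a b))) /\
   (reversible_on mul (fun _ => True) <->
      (forall a b : V, mul a b = 0 -> mul a b = mul b a))).
Proof.
move=> alg; split; split.
- exact: pairwise_gen2P.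
- exact: vN_finite_scalar_commute.
- exact: pairwise_gen2P.
- exact: reversible_zero_commute.
Qed.
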